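(* Let $p$ be an odd prime and let $n,s$ be positive integers such that $2n/s\geq 3$ is an odd integer; put $q=p^n$, $d=p^s$. Fix $\mu\in\mathbb{F}_{q^2}\setminus\mathbb{F}_q$ such that $\mu^d=u_1+u_2\mu$ with $u_1,u_2\in\mathbb{F}_q$ and $u_2$ a $(d-1)$-th power in $\mathbb{F}_{q^2}$. Let \[ J=\{(a^d+a,\,x_1+x_2\mu): a,x_1\in\mathbb{F}_q,\ x_2\in\mathbb{F}_q^*\},\qquad K=\bigcup_{\beta\in\mathbb{F}_q}\phi_{(\beta\mu)^d+\beta\mu}(J). \] Then the subgraph $\mathcal{A}_{q^2,d}[K]$ of $\mathcal{A}_{q^2,d}$ induced by $K$ satisfies $\chi(\mathcal{A}_{q^2,d}[K])\leq 2q$.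
   Context: The map $x\mapsto x^d+x$ is a bijection of $\mathbb{F}_{q^2}$. The graph $\mathcal{A}_{q^2,d}$ has vertex set $\mathbb{F}_{q^2}\times\mathbb{F}_{q^2}$; writing vertices as $(a^d+a,x)$ and $(b^d+b,y)$ with $a,b,x,y\in\mathbb{F}_{q^2}$ (uniquely), two distinct vertices are adjacent iff $a^db+ab^d=x+y$. For $k=\alpha^d+\alpha\in\mathbb{F}_{q^2}$, $\phi_k$ is the map $(a^d+a,x)\mapsto(a^d+a+k,\ x+a^d\alpha+a\alpha^d+\alpha^{d+1})$. $\mathbb{F}_q$ is the subfield of $\mathbb{F}_{q^2}$ of order $q$; $\chi$ is the chromatic number. *)

From HB Require Import structures.
From mathcomp Require Import all_boot all_order all_algebra all_field.
Set Implicit Arguments. Unset Strict Implicit. Unset Printing Implicit Defensive.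
Import GRing.Theory.
Local Open Scope ring_scope.

Section Defs.
Variable F : finFieldType.

(* membership in the subfield of order q of F (F of order q^2): x^q = x *)
Definition inFq (q : nat) (x : F) : bool := x ^+ q == x.

Definition Aadj (d : nat) : rel (F * F) := fun v w =>
  (v != w) &&
  [exists a : F, exists b : F,
     [&& a ^+ d + a == v.1, b ^+ d + b == w.1 &
         a ^+ d * b + a * b ^+ d == v.2 + w.2]].

(* phi_k with k = alpha^d + alpha:
   (a^d+a, x) |-> (a^d+a+k, x + a^d alpha + a alpha^d + alpha^(d+1)),
   where a is the (unique, by bijectivity) preimage of the first coordinate. *)
Definition phi (d : nat) (alpha : F) (v : F * F) : F * F :=
  match [pick a : F | a ^+ d + a == v.1] with
  | Some a => (v.1 + (alpha ^+ d + alpha),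
               v.2 + a ^+ d * alpha + a * alpha ^+ d + alpha ^+ d.+1)
  | None => v
  end.

Definition setJ (q d : nat) (mu : F) : {set F * F} :=
  [set v | [exists a : F, exists x1 : F, exists x2 : F,
     [&& inFq q a, inFq q x1, inFq q x2, x2 != 0 &
         v == (a ^+ d + a, x1 + x2 * mu)]]].

Definition setK (q d : nat) (mu : F) : {set F * F} :=
  \bigcup_(beta | inFq q beta) (phi d (beta * mu) @: setJ q d mu).

End Defs.

Definition colorableb (T : finType) (adj : rel T) (S : {set T}) (k : nat) : bool :=
  [exists c : {ffun T -> 'I_k},
     [forall u in S, forall v in S, adj u v ==> (c u != c v)]].

Definition chromatic_number (T : finType) (adj : rel T) (S : {set T}) : nat :=
  \big[minn/#|T|]_(k < #|T|.+1 | colorableb adj S k) (k : nat).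

From HB Require Import structures.
From mathcomp Require Import all_boot all_order all_algebra all_field.
From mathcomp Require Import ring.

(* Write v = phi_beta (a^d + a, x1 + x2 mu) with a, x1, x2 in F_q.  Translating by
   phi_beta preserves the adjacency form, so two adjacent vertices of the same
   translate phi_beta(J) satisfy a^d b + a b^d = (x1 + z1) + (x2 + z2) mu; as the left
   side and x1 + z1 lie in F_q while mu does not, z2 = -x2.  Colouring v by beta and by
   which of x2, -x2 it carries (they differ, p being odd) is therefore proper and uses
   at most 2q colours.  That phi is well defined rests on the injectivity of
   x |-> x^d + x: with |F| = d^m and m = 2n/s odd, z^d = -z forces z = z^(d^m) = -z. *)

Set Implicit Arguments.
Unset Strict Implicit.
Unset Printing Implicit Defensive.

Import Order.TTheory GRing.Theory.
Local Open Scope ring_scope.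

Section Colourings.
Variables (T : finType) (adj : rel T) (S : {set T}).

Lemma chromatic_number_le k : colorableb adj S k -> (chromatic_number adj S <= k)%N.
Proof.
move=> colk; rewrite /chromatic_number -minEnat -leEnat.
have [kT|Tk] := leqP k #|T|; last first.
  by apply: le_trans (bigmin_le_id _ _ _ _) _; rewrite leEnat ltnW.
exact: (@bigmin_le_cond _ _ _ _ (Ordinal (kT : k < #|T|.+1)%N)
          (fun i : 'I__ => colorableb adj S i) (fun i : 'I__ => nat_of_ord i)).
Qed.

Lemma colorableb_image (C : finType) (c : T -> C) k :
  (0 < k)%N -> (#|c @: S| <= k)%N ->
  {in S &, forall u v, adj u v -> c u != c v} -> colorableb adj S k.
Proof.
case: k => // k _ cardk proper_c; set s := enum (c @: S).
have idx_lt u : u \in S -> (index (c u) s <= k)%N.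
  by move=> uS; rewrite -ltnS (leq_trans _ cardk) // cardE index_mem mem_enum imset_f.
apply/existsP; exists [ffun u => inord (index (c u) s)].
apply/forallP => u; apply/implyP => uS; apply/forallP => v; apply/implyP => vS.
apply/implyP => /(proper_c u v uS vS); apply: contra; rewrite !ffunE => /eqP.
move/(congr1 (@nat_of_ord _)); rewrite !inordK ?ltnS ?idx_lt // => e.
by apply/eqP/(index_inj (c u) _ _ e); rewrite mem_enum imset_f.
Qed.

End Colourings.

Lemma card_inFq (F : finFieldType) (q : nat) :
  (1 < q)%N -> (#|[set x : F | inFq q x]| <= q)%N.
Proof.
move=> q_gt1; have size_Xq : size ('X^q - 'X : {poly F}) = q.+1.
  by rewrite size_polyDl ?size_polyXn // size_polyN size_polyX ltnS.
have Xq_neq0 : ('X^q - 'X : {poly F}) != 0 by rewrite -size_poly_eq0 size_Xq.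
rewrite cardE -ltnS -size_Xq; apply: (max_poly_roots Xq_neq0); last exact: enum_uniq.
apply/allP => x; rewrite mem_enum inE /inFq rootE !hornerE => /eqP->.
by rewrite subrr.
Qed.

Section OddCharacteristic.
Variables (F : finFieldType) (p : nat).
Hypotheses (pcharFp : p \in [pchar F]) (p_odd : odd p).

Lemma pnat_pchar_exp k : [pchar F].-nat (p ^ k)%N.
Proof.
by rewrite (eq_pnat _ (pcharf_eq pcharFp)) pnatX (pnat_id (pcharf_prime pcharFp)).
Qed.

Lemma exprDp k (x y : F) : (x + y) ^+ (p ^ k)%N = x ^+ (p ^ k)%N + y ^+ (p ^ k)%N.
Proof. exact: exprDn_pchar (pnat_pchar_exp k). Qed.

Lemma exprNp k (x : F) : (- x) ^+ (p ^ k)%N = - x ^+ (p ^ k)%N.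
Proof. exact: exprNn_pchar (pnat_pchar_exp k). Qed.

Lemma eqNr_odd_pchar (x : F) : (- x == x) = (x == 0).
Proof.
have two_neq0 : 2%:R != 0 :> F.
  rewrite -(dvdn_pcharf pcharFp) dvdn_prime2 ?(pcharf_prime pcharFp) //.
  by apply: contraTN p_odd => /eqP ->.
by rewrite eq_sym -subr_eq0 opprK -mulr2n -mulr_natr mulf_eq0 (negPf two_neq0) orbF.
Qed.

(* A choice of one element in each pair {x, -x}: since p is odd, x and -x differ
   when x != 0, and exactly one of them has the smaller enumeration rank. *)
Definition rank_sign (x : F) : bool := (enum_rank x < enum_rank (- x))%N.

Lemma rank_signN (x : F) : x != 0 -> rank_sign (- x) = ~~ rank_sign x.
Proof.
rewrite -eqNr_odd_pchar /rank_sign opprK => Nx_neq_x.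
have rank_neq : enum_rank (- x) != enum_rank x.
  by apply: contra Nx_neq_x => /eqP/enum_rank_inj->.
by rewrite -leqNgt ltn_neqAle rank_neq.
Qed.

Variable n : nat.
Local Notation q := (p ^ n)%N.

Lemma inFqD (x y : F) : inFq q x -> inFq q y -> inFq q (x + y).
Proof. by rewrite /inFq exprDp => /eqP-> /eqP->. Qed.

Lemma inFqM (x y : F) : inFq q x -> inFq q y -> inFq q (x * y).
Proof. by rewrite /inFq exprMn => /eqP-> /eqP->. Qed.

Lemma inFqX k (x : F) : inFq q x -> inFq q (x ^+ k).
Proof. by rewrite /inFq -exprM mulnC exprM => /eqP->. Qed.

Variable mu : F.
Hypothesis mu_notin_Fq : ~~ inFq q mu.

Lemma inFq_coord_eq0 (c y1 y2 : F) :
  inFq q c -> inFq q y1 -> inFq q y2 -> c = y1 + y2 * mu -> y2 = 0.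
Proof.
move=> /eqP Fc /eqP Fy1 /eqP Fy2 def_c.
apply/eqP; apply: contraNT mu_notin_Fq => y2_neq0.
have y2mu : y2 * mu = c - y1 by rewrite def_c; ring.
have : y2 * mu ^+ q = y2 * mu by rewrite -{1}Fy2 -exprMn y2mu exprDp exprNp Fc Fy1.
by move/(mulfI y2_neq0)/eqP.
Qed.

Variables (s m : nat).
Hypotheses (cardF : #|F| = ((p ^ s) ^ m)%N) (m_odd : odd m).
Local Notation d := (p ^ s)%N.

Lemma exp_iter_opp (z : F) j :
  z ^+ d = - z -> z ^+ (d ^ j) = if odd j then - z else z.
Proof.
move=> zd; elim: j => [|j IHj]; first by rewrite expn0 expr1.
by rewrite expnSr exprM IHj /=; case: (odd j); rewrite /= ?exprNp zd ?opprK.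
Qed.

Lemma exp_add_id_inj : injective (fun x : F => x ^+ d + x).
Proof.
move=> x y /= exy; apply/eqP; rewrite -subr_eq0 -eqNr_odd_pchar.
have zd : (x - y) ^+ d = - (x - y).
  have exd : x ^+ d = y ^+ d + y - x by rewrite -exy; ring.
  by rewrite exprDp exprNp exd; ring.
by have := exp_iter_opp m zd; rewrite -cardF expf_card m_odd => {2}->.
Qed.

Lemma phiE (al a y : F) : phi d al (a ^+ d + a, y) =
  ((a + al) ^+ d + (a + al), y + a ^+ d * al + a * al ^+ d + al ^+ d.+1).
Proof.
rewrite /phi; case: pickP => [a' /= /eqP /exp_add_id_inj -> | /(_ a)].
  by rewrite exprDp; congr (_, _); ring.
by rewrite eqxx.
Qed.

Lemma Aadj_phi (al a b y z : F) :
  Aadj d (phi d al (a ^+ d + a, y)) (phi d al (b ^+ d + b, z)) ->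
  a ^+ d * b + a * b ^+ d = y + z.
Proof.
rewrite !phiE => /andP[_ /existsP[a' /existsP[b' /and3P[/= ea eb e]]]].
move: ea eb e => /eqP/exp_add_id_inj-> /eqP/exp_add_id_inj->.
rewrite !exprDp !exprS -subr_eq0 => /eqP e.
by apply/eqP; rewrite -subr_eq0 -e; apply/eqP; ring.
Qed.

Lemma Aadj_phi_opp (al a b x1 x2 z1 z2 : F) :
  inFq q a -> inFq q b -> inFq q x1 -> inFq q z1 -> inFq q x2 -> inFq q z2 ->
  Aadj d (phi d al (a ^+ d + a, x1 + x2 * mu)) (phi d al (b ^+ d + b, z1 + z2 * mu)) ->
  z2 = - x2.
Proof.
move=> Fa Fb Fx1 Fz1 Fx2 Fz2 /Aadj_phi e; apply/eqP; rewrite -addr_eq0; apply/eqP.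
apply: (@inFq_coord_eq0 (a ^+ d * b + a * b ^+ d) (x1 + z1)).
- by apply: inFqD; apply: inFqM => //; apply: inFqX.
- exact: inFqD.
- exact: inFqD.
- by rewrite e; ring.
Qed.

Definition setK_witness (v : F * F) (t : F * F * F * F) : bool :=
  let: (be, a, x1, x2) := t in
  [&& inFq q be, inFq q a, inFq q x1, inFq q x2, x2 != 0 &
      v == phi d (be * mu) (a ^+ d + a, x1 + x2 * mu)].

(* A vertex may lie in several translates phi_beta(J); the colour is read off one
   chosen witness. *)
Definition setK_colour (v : F * F) : F * bool :=
  if [pick t | setK_witness v t] is Some (be, _, _, x2) then (be, rank_sign x2)
  else (0, false).

Lemma setK_colourP v : v \in setK q d mu ->
  exists be a x1 x2, setK_witness v (be, a, x1, x2) /\ setK_colour v = (be, rank_sign x2).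
Proof.
move=> /bigcupP[be Fbe /imsetP[w /[!inE] /existsP[a /existsP[x1 /existsP[x2 Jw]]] ->]].
rewrite /setK_colour; case: pickP => [[[[be' a'] x1'] x2'] wit | /(_ (be, a, x1, x2))].
  by exists be', a', x1', x2'.
by move: Jw => /and5P[Fa Fx1 Fx2 x2_neq0 /eqP->] /=; rewrite Fbe Fa Fx1 Fx2 x2_neq0 eqxx.
Qed.

Hypothesis n_gt0 : (0 < n)%N.

Lemma card_setK_colour : (#|setK_colour @: setK q d mu| <= 2 * q)%N.
Proof.
have sub_X : setK_colour @: setK q d mu \subset setX [set x | inFq q x] [set: bool].
  apply/subsetP => _ /imsetP[v /setK_colourP[be [a [x1 [x2 [wit ->]]]]] ->].
  by case/and5P: wit => Fbe _ _ _ _; rewrite !inE andbT.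
rewrite mulnC (leq_trans (subset_leq_card sub_X)) // cardsX cardsT card_bool leq_mul2r.
rewrite card_inFq ?orbT // -{1}(expn0 p) ltn_exp2l // prime_gt1 //.
exact: pcharf_prime pcharFp.
Qed.

Lemma setK_colour_proper :
  {in setK q d mu &, forall u v, Aadj d u v -> setK_colour u != setK_colour v}.
Proof.
move=> u v /setK_colourP[be [a [x1 [x2 [witu ->]]]]].
move=> /setK_colourP[ga [b [z1 [z2 [witv ->]]]]].
case/and5P: witu => _ Fa Fx1 Fx2 /andP[x2_neq0 /eqP->].
case/and5P: witv => _ Fb Fz1 Fz2 /andP[_ /eqP->].
move=> adj; apply/eqP => -[eq_be]; rewrite -eq_be in adj.
by rewrite (Aadj_phi_opp Fa Fb Fx1 Fz1 Fx2 Fz2 adj) rank_signN //; case: (rank_sign x2).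
Qed.

Theorem chromatic_number_setK : (chromatic_number (Aadj d) (setK q d mu) <= 2 * q)%N.
Proof.
apply/chromatic_number_le/(colorableb_image (c := setK_colour)).
- by rewrite muln_gt0 expn_gt0 (prime_gt0 (pcharf_prime pcharFp)).
- exact: card_setK_colour.
- exact: setK_colour_proper.
Qed.

End OddCharacteristic.

Theorem lemma9 (p n s : nat) (F : finFieldType) (mu u1 u2 : F) :
  prime p -> odd p -> (0 < n)%N -> (0 < s)%N ->
  (s %| 2 * n)%N -> odd (2 * n %/ s) -> (3 <= 2 * n %/ s)%N ->
  #|F| = ((p ^ n) ^ 2)%N ->
  ~~ inFq (p ^ n) mu ->
  inFq (p ^ n) u1 -> inFq (p ^ n) u2 ->
  mu ^+ (p ^ s) = u1 + u2 * mu ->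
  (exists w : F, w ^+ (p ^ s).-1 = u2) ->
  (chromatic_number (Aadj (p ^ s)) (setK (p ^ n) (p ^ s) mu) <= 2 * p ^ n)%N.
Proof.
move=> p_prime p_odd n_gt0 _ s_dvd m_odd _ cardF mu_notin_Fq _ _ _ _.
have pcharFp : p \in [pchar F].
  by apply: (@card_finPcharP _ _ (n * 2)); rewrite // cardF expnM.
have cardF' : #|F| = ((p ^ s) ^ (2 * n %/ s))%N.
  by rewrite cardF -!expnM [(s * _)%N]mulnC divnK // mulnC.
exact: (chromatic_number_setK pcharFp p_odd mu_notin_Fq cardF' m_odd n_gt0).
Qed.
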